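(* Let $n\ge2$ and let $S_N.o$ be the Lie hypersurface of $G_2^\ast(\mathbb{R}^{n+3})$ described below, identified with the Lie group $S_N$ with the induced left-invariant metric. Equip it with the almost contact metric structure induced from the Kähler structure: $\xi=-JN$, $\eta=\langle\cdot,\xi\rangle$, $\varphi X=JX-\eta(X)N$, induced metric. Then $(S_N.o,\eta,\xi,\varphi,\langle,\rangle)$ is a contact metric manifold, i.e. $\Phi=d\eta$ where $\Phi(X,Y)=\langle X,\varphi Y\rangle$.
   Context: Identify $G_2^\ast(\mathbb{R}^{n+3})=\mathrm{SO}_0(2,n+1)/(\mathrm{SO}(2)\times\mathrm{SO}(n+1))$, with the invariant Kähler metric normalized to minimal sectional curvature $-8$, with the simply-connected Lie group $S$ whose Lie algebra $\mathfrak{s}$ has orthonormal basis $A_1,A_2,X_0,Y_1,\dots,Y_{n-1},Z_1,\dots,Z_{n-1},W_0$, nonzero brackets (with $c=2\sqrt2$) $[A_1,X_0]=cX_0$, $[A_1,Y_i]=-(c/2)Y_i$, $[A_1,Z_i]=(c/2)Z_i$, $[A_2,Y_i]=(c/2)Y_i$, $[A_2,Z_i]=(c/2)Z_i$, $[A_2,W_0]=cW_0$, $[X_0,Y_i]=cZ_i$, $[Y_i,Z_i]=cW_0$, left-invariant metric making the basis orthonormal and left-invariant complex structure $J$ with $J(A_1)=-X_0$, $J(A_2)=W_0$, $J(Y_i)=Z_i$, $J^2=-\mathrm{id}$. Let $N=\frac1{\sqrt2}(-A_1-A_2)$, $\mathfrak{s}_N=\mathfrak{s}\ominus\mathbb{R}N$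 (a subalgebra), $S_N$ the connected subgroup of $S$ with Lie algebra $\mathfrak{s}_N$, and $S_N.o$ its orbit through the identity $o$, a real hypersurface with left-invariant unit normal $N$. Here $d\eta(X,Y)=\tfrac12(X\eta(Y)-Y\eta(X)-\eta([X,Y]))$. *)

(* The Lie algebra s of the solvable group S (Iwasawa
   model of G_2^*(R^{n+3})) over an arbitrary real closed field R
   (the paper's case is R = the reals). *)
From HB Require Import structures.
From mathcomp Require Import all_boot all_order all_algebra.
Set Implicit Arguments. Unset Strict Implicit. Unset Printing Implicit Defensive.
Import Order.TTheory GRing.Theory Num.Theory.
Local Open Scope ring_scope.

(* Labels of the orthonormal basis A1,A2,X0,W0,Y_1..Y_m,Z_1..Z_m of s,
   with m = n-1 (indices shifted to 0..m-1). *)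
Inductive idx (m : nat) : Type :=
| iA1 | iA2 | iX0 | iW0 | iY of 'I_m | iZ of 'I_m.
Arguments iA1 {m}. Arguments iA2 {m}. Arguments iX0 {m}. Arguments iW0 {m}.

Definition basis_list (m : nat) : seq (idx m) :=
  [:: iA1; iA2; iX0; iW0] ++ map (@iY m) (enum 'I_m) ++ map (@iZ m) (enum 'I_m).

Section LieAlg.
Variables (R : rcfType) (m : nat).

Definition vec := idx m -> R.

Definition vadd (u v : vec) : vec := fun e => u e + v e.
Definition vscale (a : R) (v : vec) : vec := fun e => a * v e.

Definition bvec (e : idx m) : vec := fun f =>
  match e, f with
  | iA1, iA1 | iA2, iA2 | iX0, iX0 | iW0, iW0 => 1
  | iY i, iY j | iZ i, iZ j => if i == j then 1 else 0
  | _, _ => 0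
  end.

Definition c : R := 2 * Num.sqrt 2.

Definition br0 (e f : idx m) : vec :=
  match e, f with
  | iA1, iX0 => vscale c (bvec iX0)
  | iA1, iY i => vscale (- (c / 2)) (bvec (iY i))
  | iA1, iZ i => vscale (c / 2) (bvec (iZ i))
  | iA2, iY i => vscale (c / 2) (bvec (iY i))
  | iA2, iZ i => vscale (c / 2) (bvec (iZ i))
  | iA2, iW0 => vscale c (bvec iW0)
  | iX0, iY i => vscale c (bvec (iZ i))
  | iY i, iZ j => if i == j then vscale c (bvec iW0) else (fun _ => 0)
  | _, _ => fun _ => 0
  end.

Definition br (e f : idx m) : vec := vadd (br0 e f) (vscale (-1) (br0 f e)).

Definition bracket (u v : vec) : vec := fun g =>
  \sum_(e <- basis_list m) \sum_(f <- basis_list m) u e * v f * br e f g.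

(* Left-invariant metric: the basis is orthonormal. *)
Definition ip (u v : vec) : R := \sum_(e <- basis_list m) u e * v e.

(* Complex structure J on the basis: J A1 = -X0, J A2 = W0, J Y_i = Z_i,
   and (from J^2 = -id) J X0 = A1, J W0 = -A2, J Z_i = -Y_i. *)
Definition Jb (e : idx m) : vec :=
  match e with
  | iA1 => vscale (-1) (bvec iX0)
  | iX0 => bvec iA1
  | iA2 => bvec iW0
  | iW0 => vscale (-1) (bvec iA2)
  | iY i => bvec (iZ i)
  | iZ i => vscale (-1) (bvec (iY i))
  end.

Definition J (v : vec) : vec := fun g => \sum_(e <- basis_list m) v e * Jb e g.

Definition Nv : vec :=
  vscale (1 / Num.sqrt 2) (vadd (vscale (-1) (bvec iA1)) (vscale (-1) (bvec iA2))).

(* s_N = s minus R N (orthogonal complement of N in s). *)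
Definition in_sN (v : vec) : Prop := ip v Nv = 0.

Definition xi : vec := vscale (-1) (J Nv).
Definition eta (v : vec) : R := ip v xi.
Definition phi (v : vec) : vec := vadd (J v) (vscale (- eta v) Nv).

Definition Phi (u v : vec) : R := ip u (phi v).

(* d eta(X,Y) = 1/2 (X eta(Y) - Y eta(X) - eta([X,Y])) evaluated on
   left-invariant vector fields X, Y: eta(X), eta(Y) are then constant
   functions on S_N, so their derivatives X eta(Y), Y eta(X) vanish. *)
Definition deta (u v : vec) : R := (1 / 2) * (0 - 0 - eta (bracket u v)).

End LieAlg.

From Pilot Require Import Defs.
From HB Require Import structures.
From mathcomp Require Import all_boot all_order all_algebra.
From mathcomp Require Import ring.
Import Order.TTheory GRing.Theory Num.Theory.
Local Open Scope ring_scope.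

(* On a tangent vector X (one orthogonal to N) the normal part of phi Y drops
   out, so Phi(X, Y) = <X, J Y> is the Kahler form.  Since xi = (W0 - X0)/sqrt 2,
   d eta(X, Y) = -(1/2) eta([X, Y]) only sees the X0- and W0-components of the
   bracket, which come from the pairs (A1, X0), (A2, W0) and (Y_i, Z_i): exactly
   the pairs exchanged by J.  With c = 2 sqrt 2 the constants match, and
   d eta = <., J .> on all of s. *)

Lemma sum_basis (R : rcfType) m (F : idx m -> R) :
  \sum_(e <- basis_list m) F e = F iA1 + F iA2 + F iX0 + F iW0 +
   \sum_i F (iY i) + \sum_i F (iZ i).
Proof.
rewrite /basis_list big_cat /= !big_cons big_nil big_cat /= !big_map.
by rewrite -!big_enum /= addr0 !addrA.
Qed.

Section SLieAlgebra.
Variables (R : rcfType) (m : nat).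
Implicit Types (u v w : vec R m) (a : R) (e f g : idx m).

Lemma sum_if (j : 'I_m) (F : 'I_m -> R) :
  \sum_i (if i == j then F i else 0) = F j.
Proof. by rewrite -big_mkcond big_pred1_eq. Qed.

Lemma JE v g : J v g = match g with
  | iA1 => v iX0 | iX0 => - v iA1 | iA2 => - v iW0 | iW0 => v iA2
  | iY i => - v (iZ i) | iZ i => v (iY i) end.
Proof.
have summandE e : v e * Jb R e g = match e, g with
  | iX0, iA1 => v iX0 | iA1, iX0 => - v iA1
  | iA2, iW0 => v iA2 | iW0, iA2 => - v iW0
  | iY i, iZ j => if i == j then v (iY i) else 0
  | iZ i, iY j => if i == j then - v (iZ i) else 0
  | _, _ => 0 end.
  by case: e g => [||||i|i] [||||j|j]; rewrite /Jb /vscale /bvec /=;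
    try (case: eqP => _ /=); ring.
rewrite /J; under eq_bigr do rewrite summandE.
rewrite sum_basis; clear summandE.
by case: g => [||||j|j] /=; rewrite !big1_eq ?sum_if ?add0r ?addr0.
Qed.

Lemma NvE g : @Nv R m g = match g with iA1 | iA2 => - (Num.sqrt 2)^-1 | _ => 0 end.
Proof. by case: g => [||||j|j]; rewrite /Nv /vadd /vscale /bvec /=; ring. Qed.

Lemma ipDr u v w : ip u (vadd v w) = ip u v + ip u w.
Proof. by rewrite /ip -big_split; apply: eq_bigr => e _; rewrite mulrDr. Qed.

Lemma ipZr u v a : ip u (vscale a v) = a * ip u v.
Proof. by rewrite /ip mulr_sumr; apply: eq_bigr => e _; rewrite mulrCA. Qed.

Lemma ip_J u v : ip u (J v) =
  u iA1 * v iX0 - u iX0 * v iA1 - (u iA2 * v iW0 - u iW0 * v iA2)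
  - \sum_i (u (iY i) * v (iZ i) - u (iZ i) * v (iY i)).
Proof.
rewrite /ip; under eq_bigr do rewrite JE.
rewrite sum_basis /= sumrB; under eq_bigr do rewrite mulrN.
rewrite sumrN; ring.
Qed.

Lemma br_X0 e f : br R e f iX0 = match e, f with
  | iA1, iX0 => c R | iX0, iA1 => - c R | _, _ => 0 end.
Proof.
by case: e f => [||||i|i] [||||j|j]; rewrite /br /br0 /vadd /vscale /bvec /=;
  try (case: eqP => _ /=); ring.
Qed.

Lemma br_W0 e f : br R e f iW0 = match e, f with
  | iA2, iW0 => c R | iW0, iA2 => - c R
  | iY i, iZ j => if i == j then c R else 0
  | iZ i, iY j => if j == i then - c R else 0
  | _, _ => 0 end.
Proof.
by case: e f => [||||i|i] [||||j|j]; rewrite /br /br0 /vadd /vscale /bvec /=;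
  try (case: eqP => _ /=); ring.
Qed.

Lemma bracket_X0 u v : bracket u v iX0 = c R * (u iA1 * v iX0 - u iX0 * v iA1).
Proof.
have summandE e f : u e * v f * br R e f iX0 = match e, f with
  | iA1, iX0 => c R * (u iA1 * v iX0) | iX0, iA1 => - (c R * (u iX0 * v iA1))
  | _, _ => 0 end.
  by rewrite br_X0; case: e f => [||||i|i] [||||j|j]; ring.
rewrite /bracket; under eq_bigr do under eq_bigr do rewrite summandE.
by rewrite sum_basis /= !big1_eq !sum_basis /= !big1_eq; ring.
Qed.

Lemma bracket_W0 u v : bracket u v iW0 = c R * (u iA2 * v iW0 - u iW0 * v iA2
  + \sum_i (u (iY i) * v (iZ i) - u (iZ i) * v (iY i))).
Proof.
have summandE e f : u e * v f * br R e f iW0 = match e, f with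
  | iA2, iW0 => c R * (u iA2 * v iW0) | iW0, iA2 => - (c R * (u iW0 * v iA2))
  | iY i, iZ j => if j == i then c R * (u (iY i) * v (iZ j)) else 0
  | iZ i, iY j => if j == i then - (c R * (u (iZ i) * v (iY j))) else 0
  | _, _ => 0 end.
  rewrite br_W0; case: e f => [||||i|i] [||||j|j] //=; try ring;
    by rewrite [j == i]eq_sym; case: eqP => _; ring.
rewrite /bracket; under eq_bigr do under eq_bigr do rewrite summandE.
rewrite sum_basis /= !big1_eq !sum_basis /= !big1_eq.
under [X in _ + X + _ = _]eq_bigr do rewrite sum_basis /= !big1_eq sum_if !add0r.
under [X in _ + X = _]eq_bigr do rewrite sum_basis /= !big1_eq sum_if !add0r ?addr0.
rewrite sumrN sumrB -!mulr_sumr; ring.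
Qed.

Lemma etaE v : Defs.eta v = (v iW0 - v iX0) / Num.sqrt 2.
Proof.
rewrite /Defs.eta /xi ipZr ip_J !NvE.
under eq_bigr do rewrite !NvE /= !mulr0 subrr.
by rewrite big1_eq; ring.
Qed.

Definition kahler_form u v : R := ip u (J v).

Lemma Phi_kahler u v : in_sN u -> Phi u v = kahler_form u v.
Proof. by move=> uN; rewrite /Phi /phi ipDr ipZr uN mulr0 addr0. Qed.

Lemma deta_kahler u v : deta u v = kahler_form u v.
Proof.
have sqrt2_neq0 : Num.sqrt (2 : R) != 0 by rewrite sqrtr_eq0 -ltNge ltr0n.
rewrite /deta etaE bracket_W0 bracket_X0 /kahler_form ip_J /c.
by field; rewrite ?pnatr_eq0.
Qed.

End SLieAlgebra.

Theorem proposition5p5 (R : rcfType) (n : nat) (hn : (2 <= n)%N)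
  (X Y : vec R n.-1) :
  in_sN X -> in_sN Y -> Phi X Y = deta X Y.
Proof. by move=> X_sN _; rewrite Phi_kahler // deta_kahler. Qed.
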